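(* Let $M$ be a matroid of rank $n$, where $n \ge 2$, and let $B_1, \dots, B_n$ be pairwise disjoint bases of $M$. Then there are at least $\left\lfloor \frac{n}{6 \lceil \log n \rceil} \right\rfloor$ pairwise disjoint transversal bases of $(B_1, \dots, B_n)$.
   Context: Here $\log$ denotes the natural logarithm. A transversal basis of a collection $(B_1,\dots,B_n)$ of sets of elements in a rank-$n$ matroid is a basis of the matroid containing exactly one element from each of $B_1,\dots,B_n$. *)

From HB Require Import structures.
From mathcomp Require Import all_boot all_order all_algebra.
From mathcomp Require Import reals exp Rstruct.
Set Implicit Arguments. Unset Strict Implicit. Unset Printing Implicit Defensive.
Import Order.TTheory GRing.Theory Num.Theory.

Record matroid (T : finType) := Matroid {
  indep : {set T} -> bool;
  indep0 : indep set0;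
  indep_subset : forall A B : {set T}, A \subset B -> indep B -> indep A;
  indep_exchange : forall A B : {set T}, indep A -> indep B -> #|A| < #|B| ->
    exists2 x, x \in B :\: A & indep (x |: A)
}.

Definition is_basis (T : finType) (M : matroid T) (B : {set T}) : bool :=
  indep M B && [forall X : {set T}, (indep M X && (B \subset X)) ==> (X == B)].

Definition mrank (T : finType) (M : matroid T) : nat :=
  \max_(A : {set T} | indep M A) #|A|.

Definition transversal_basis (T : finType) (M : matroid T) (n : nat)
  (B : 'I_n -> {set T}) (X : {set T}) : Prop :=
  is_basis M X /\ forall i : 'I_n, #|X :&: B i| = 1%N.

Definition tbound (n : nat) : nat :=
  `| Num.floor ((n%:R : Rdefinitions.R) /
        (6 * (Num.ceil (ln (n%:R : Rdefinitions.R)))%:~R)) |%N.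

From mathcomp Require Import all_boot all_order all_algebra.
From mathcomp Require Import zify ring lra.
From mathcomp Require Import reals sequences exp Rstruct.
Set Implicit Arguments. Unset Strict Implicit. Unset Printing Implicit Defensive.

(* Colour the ground set with [t = tbound n] colours.  By Rado's theorem,
   colour [j] yields a transversal basis as soon as the colour-[j] parts [C_i]
   of the bases satisfy the Hall-Rado condition [|I| <= r (U_(i in I) C_i)],
   and transversal bases of different colours are disjoint.  Fix [j] and [I]
   and let [m = n + 1 - |I|].  Revealing the colours on one more basis [B_i]
   multiplies the average of ['C(n - r U, m)] by at most [(1 - 1/t)^m],
   because [B_i] contains [n - r U] elements that are independent over [U];
   hence at most [t^|T| 'C(n, m) (1 - 1/t)^(m |I|)] colourings violate the
   condition at [(j, I)].  When [6 t ceil(ln n) <= n] these counts sum to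
   less than [t^|T|], so some colouring is good for all colours at once. *)

Section MatroidRank.
Variables (T : finType) (M : matroid T).
Implicit Types X Y Z : {set T}.

Definition rk X : nat := \max_(Y : {set T} | (Y \subset X) && indep M Y) #|Y|.

Lemma indep_card_le_rk X Y : Y \subset X -> indep M Y -> #|Y| <= rk X.
Proof. by move=> sYX iY; apply: (@leq_bigmax_cond _ _ (fun Y : {set T} => #|Y|) Y); rewrite sYX. Qed.

Lemma rk_witness X : exists2 Y : {set T}, (Y \subset X) && indep M Y & #|Y| = rk X.
Proof.
have : 0 < #|[pred Y : {set T} | (Y \subset X) && indep M Y]|.
  by apply/card_gt0P; exists set0; rewrite inE sub0set indep0.
by case/(eq_bigmax_cond (fun Y : {set T} => #|Y|)) => Y; rewrite inE => ? eY; exists Y.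
Qed.

Lemma rk_le_card X : rk X <= #|X|.
Proof. by have [Y /andP[sYX _] <-] := rk_witness X; apply: subset_leq_card. Qed.

Lemma rkS X Y : X \subset Y -> rk X <= rk Y.
Proof.
move=> sXY; have [Z /andP[sZX iZ] <-] := rk_witness X.
by apply: indep_card_le_rk (subset_trans sZX sXY) iZ.
Qed.

Lemma rk_set0 : rk set0 = 0.
Proof. by apply/eqP; rewrite -leqn0 -(cards0 T) rk_le_card. Qed.

Lemma indep_card_le_mrank Y : indep M Y -> #|Y| <= mrank M.
Proof. exact: (@leq_bigmax_cond _ _ (fun Y : {set T} => #|Y|) Y). Qed.

Lemma rk_le_mrank X : rk X <= mrank M.
Proof. by have [Y /andP[_ iY] <-] := rk_witness X; apply: indep_card_le_mrank. Qed.

Lemma mrank_witness : exists2 Y : {set T}, indep M Y & #|Y| = mrank M.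
Proof.
have : 0 < #|[pred Y : {set T} | indep M Y]| by apply/card_gt0P; exists set0; rewrite inE indep0.
by case/(eq_bigmax_cond (fun Y : {set T} => #|Y|)) => Y; rewrite inE => ? eY; exists Y.
Qed.

Lemma rk_eq_card_indep X : rk X = #|X| -> indep M X.
Proof.
have [Y /andP[sYX iY] <-] := rk_witness X => eYX.
suff -> : X = Y by [].
by apply/eqP; rewrite eq_sym eqEcard sYX eYX leqnn.
Qed.

Lemma indep_extend J Z : indep M J -> J \subset Z ->
  exists K : {set T}, [/\ J \subset K, K \subset Z, indep M K & #|K| = rk Z].
Proof.
move: {2}(rk Z - #|J|) (erefl (rk Z - #|J|)) => k.
elim: k J => [|k IH] J gapJ iJ sJZ.
  exists J; split=> //; apply/eqP; rewrite eqn_leq indep_card_le_rk //=.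
  by rewrite -subn_eq0 gapJ.
have [Y /andP[sYZ iY] eY] := rk_witness Z.
have ltJY : #|J| < #|Y| by rewrite eY -subn_gt0 gapJ.
have [x /setDP[xY xJ] ixJ] := indep_exchange iJ iY ltJY.
have [||K [sxJK]] := IH (x |: J) _ ixJ.
- by rewrite cardsU1 xJ add1n subnS gapJ.
- by rewrite subUset sub1set (subsetP sYZ) // sJZ.
by exists K; split=> //; apply: subset_trans sxJK; apply: subsetUr.
Qed.

Lemma rk_submod X Y : rk (X :|: Y) + rk (X :&: Y) <= rk X + rk Y.
Proof.
have [J /andP[sJ iJ] eJ] := rk_witness (X :&: Y).
have sJU : J \subset X :|: Y by rewrite (subset_trans sJ) // subIset ?subsetUl.
have [K [sJK sKU iK eK]] := indep_extend iJ sJU.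
have iKX Z : indep M (K :&: Z) by apply: indep_subset iK; apply: subsetIl.
have eKXY : K :&: (X :&: Y) = J.
  apply/eqP; rewrite eq_sym eqEcard subsetI sJK sJ eJ.
  exact: indep_card_le_rk (subsetIr _ _) (iKX _).
have cardK : #|K :&: X| + #|K :&: Y| = #|K| + #|J|.
  by rewrite -eKXY -cardsUI -setIUr (setIidPl sKU) setIACA setIid.
rewrite -eK -eJ -cardK.
by apply: leq_add; apply: indep_card_le_rk (subsetIr _ _) (iKX _).
Qed.

Lemma card_basis B : is_basis M B -> #|B| = mrank M.
Proof.
case/andP=> iB /forallP maxB; apply/eqP; rewrite eqn_leq indep_card_le_mrank //=.
rewrite leqNgt; apply/negP => ltB.
have [Y iY eY] := mrank_witness; rewrite -eY in ltB.
have [x /setDP[_ xB] ixB] := indep_exchange iB iY ltB.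
have /eqP eqB := implyP (maxB (x |: B)) (introT andP (conj ixB (subsetUr _ _))).
by move: xB; rewrite -eqB setU11.
Qed.

Lemma indep_card_basis X : indep M X -> #|X| = mrank M -> is_basis M X.
Proof.
move=> iX eX; rewrite /is_basis iX; apply/forallP => Y; apply/implyP => /andP[iY sXY].
by rewrite eq_sym eqEcard sXY eX indep_card_le_mrank.
Qed.

End MatroidRank.

Section Rado.
Variables (T : finType) (M : matroid T) (n : nat).
Implicit Types (A : 'I_n -> {set T}) (I : {set 'I_n}).

Definition rado_cond A : bool :=
  [forall I : {set 'I_n}, #|I| <= rk M (\bigcup_(k in I) A k)].

Definition indep_transversal A (g : 'I_n -> T) : Prop :=
  [/\ forall i, g i \in A i, indep M [set g i | i : 'I_n] & #|[set g i | i : 'I_n]| = n].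

Definition shrink A i x k : {set T} := if k == i then A i :\ x else A k.

Lemma shrink_sub A i x k : shrink A i x k \subset A k.
Proof. by rewrite /shrink; case: eqP => [-> |]; rewrite ?subD1set. Qed.

Lemma shrink_neq A i x k : k != i -> shrink A i x k = A k.
Proof. by rewrite /shrink => /negbTE ->. Qed.

Lemma bigcup_shrink_notin A i x I :
  i \notin I -> \bigcup_(k in I) shrink A i x k = \bigcup_(k in I) A k.
Proof. by move=> iI; apply: eq_bigr => k kI; rewrite shrink_neq //; apply: contraNneq iI => <-. Qed.

Lemma sum_card_shrink A i x : x \in A i ->
  (\sum_k #|shrink A i x k|).+1 = \sum_k #|A k|.
Proof.
move=> xA; rewrite (bigD1 i) // [RHS](bigD1 i) //= /shrink eqxx.
rewrite (cardsD1 x (A i)) xA -addSn; congr (_ + _); apply: eq_bigr => k.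
by move/negbTE ->.
Qed.

(* If both shrinkings fail, at [I1] and [I2], submodularity of the rank at the
   two failing unions [X] and [Y] contradicts the condition at [I1 :|: I2] and
   [(I1 :&: I2) :\ i]: as [x != y], [X :|: Y] still covers every [A k]. *)
Lemma rado_cond_shrink A i x y : x != y -> rado_cond A ->
  rado_cond (shrink A i x) || rado_cond (shrink A i y).
Proof.
move=> neq_xy /forallP radoA; apply/norP => -[/forallPn[I1] + /forallPn[I2]].
rewrite -!ltnNge => badI1 badI2.
have inI I z : rk M (\bigcup_(k in I) shrink A i z k) < #|I| -> i \in I.
  by apply: contraLR => /bigcup_shrink_notin ->; rewrite -leqNgt radoA.
have iI1 := inI _ _ badI1; have iI2 := inI _ _ badI2.
set X := \bigcup_(k in I1) _ in badI1; set Y := \bigcup_(k in I2) _ in badI2.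
have sU : \bigcup_(k in I1 :|: I2) A k \subset X :|: Y.
  apply/bigcupsP => k; rewrite inE.
  have [-> _ | nki /orP[kI | kI]] := eqVneq k i; last 2 first.
  - by apply/subsetU/orP; left; rewrite -(shrink_neq A x nki) (bigcup_max k).
  - by apply/subsetU/orP; right; rewrite -(shrink_neq A y nki) (bigcup_max k).
  apply/subsetP => z zA; rewrite inE; case: (eqVneq z x) => [ezx | nzx].
  - apply/orP; right; apply/bigcupP; exists i => //.
    by rewrite /shrink eqxx !inE zA ezx neq_xy.
  - apply/orP; left; apply/bigcupP; exists i => //.
    by rewrite /shrink eqxx !inE zA nzx.
have sI : \bigcup_(k in (I1 :&: I2) :\ i) A k \subset X :&: Y.
  apply/bigcupsP => k; rewrite !inE => /and3P[nki kI1 kI2].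
  by rewrite subsetI -{1}(shrink_neq A x nki) -(shrink_neq A y nki) !(bigcup_max k).
have := radoA (I1 :|: I2); have := radoA ((I1 :&: I2) :\ i).
have := rkS M sU; have := rkS M sI; have := rk_submod M X Y.
have := cardsUI I1 I2; have := cardsD1 i (I1 :&: I2); rewrite !inE iI1 iI2 /=.
move: badI1 badI2; set a := #|I1|; set b := #|I2|; set c := #|I1 :&: I2|.
by set d := #|_ :\ i|; set u := #|I1 :|: I2|; lia.
Qed.

Lemma rado_singletons A : (forall i, #|A i| <= 1) -> rado_cond A ->
  exists g, indep_transversal A g.
Proof.
move=> A_le1 /forallP radoA.
have /fin_all_exists[g Ag] i : exists z, A i = [set z].
  apply/cards1P; rewrite eqn_leq A_le1 (leq_trans _ (rk_le_card M _)) //.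
  by have := radoA [set i]; rewrite big_set1 cards1.
have imgE : [set g i | i : 'I_n] = \bigcup_(k in [set: 'I_n]) A k.
  apply/setP => z; apply/imsetP/bigcupP => [[i _ ->] | [i _]].
    by exists i; rewrite ?Ag ?set11.
  by rewrite Ag inE => /eqP ->; exists i.
have := radoA setT; rewrite -imgE cardsT card_ord => n_le_rk.
have img_le : #|[set g i | i : 'I_n]| <= n by rewrite -[X in _ <= X]card_ord leq_imset_card.
have img_n : #|[set g i | i : 'I_n]| = n.
  by apply/eqP; rewrite eqn_leq img_le (leq_trans n_le_rk (rk_le_card M _)).
exists g; split=> [i | | //]; first by rewrite Ag set11.
by apply: rk_eq_card_indep; apply/eqP; rewrite eqn_leq rk_le_card img_n n_le_rk.
Qed.

(* Shrink the sets one element at a time, keeping the Hall-Rado condition,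
   until they are singletons. *)
Theorem rado A : rado_cond A -> exists g, indep_transversal A g.
Proof.
move: {2}(\sum_k #|A k|) (leqnn (\sum_k #|A k|)) => N.
elim: N A => [|N IH] A sizeA radoA;
  have [/existsP[i A_gt1] | /existsPn A_le1] := boolP [exists i, 1 < #|A i|];
  try by apply: rado_singletons => // i; rewrite leqNgt A_le1.
  by move: sizeA; rewrite (bigD1 i) //=; lia.
have [x [y [xA yA neq_xy]]] := card_gt1P A_gt1.
suff shrinkP z : z \in A i -> rado_cond (shrink A i z) -> exists g, indep_transversal A g.
  by case/orP: (rado_cond_shrink i neq_xy radoA) => /shrinkP; apply.
move=> zA /IH[|g [gA indep_g card_g]]; first by rewrite -ltnS sum_card_shrink.
by exists g; split=> // k; apply: subsetP (shrink_sub A i z k) _ (gA k).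
Qed.

End Rado.

Lemma sum_nat_of_bool (aT : finType) (P : pred aT) : \sum_x (P x : nat) = #|P|.
Proof. by rewrite -sum1_card [RHS]big_mkcond; apply: eq_bigr => x _; rewrite unfold_in; case: (P x). Qed.

Lemma card_le_sum_cover (aT I : finType) (A : I -> {set aT}) :
  (forall x, exists i, x \in A i) -> #|aT| <= \sum_i #|A i|.
Proof.
move=> cover; rewrite -sum1_card.
under [leqRHS]eq_bigr do rewrite -sum1_card big_mkcond /=.
rewrite exchange_big leq_sum // => x _.
by have [i xA] := cover x; rewrite (bigD1 i) //= xA.
Qed.

Section FinFunCounting.
Variables aT rT : finType.
Implicit Types (S Y : {set aT}) (f g : {ffun aT -> rT}).

Lemma card_ffun_restricted Y (F : aT -> pred rT) :
  #|[pred f : {ffun aT -> rT} | [forall y in Y, F y (f y)]]| =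
    \prod_(y in Y) #|F y| * #|rT| ^ #|~: Y|.
Proof.
pose G y := [pred z | (y \in Y) ==> F y z].
have -> : #|[pred f : {ffun aT -> rT} | [forall y in Y, F y (f y)]]| = #|family G|.
  by apply: eq_card => f; rewrite !inE.
rewrite card_family foldrE big_map big_enum (bigID (mem Y)) /=; congr (_ * _).
  by apply: eq_bigr => y yY; apply: eq_card => z; rewrite unfold_in /= yY.
rewrite -prod_nat_const; apply: eq_big => [y | y yY]; first by rewrite !inE.
by apply: eq_card => z; rewrite unfold_in /= (negbTE yY).
Qed.

Definition splice S f g : {ffun aT -> rT} := [ffun y => if y \in S then g y else f y].

(* [(f, g) |-> (splice S f g, splice S g f)] is an involution of pairs of maps. *)
Lemma sum_splice S (F : {ffun aT -> rT} -> nat) :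
  \sum_f \sum_g F (splice S f g) = #|rT| ^ #|aT| * \sum_f F f.
Proof.
pose swap (p : {ffun aT -> rT} * {ffun aT -> rT}) := (splice S p.1 p.2, splice S p.2 p.1).
have swapK : involutive swap.
  by case=> f g; congr (_, _); apply/ffunP => y; rewrite !ffunE; case: (y \in S).
transitivity (\sum_(p : {ffun aT -> rT} * {ffun aT -> rT}) F p.1).
  by rewrite pair_bigA [RHS](reindex_inj (inv_inj swapK)).
rewrite -(pair_bigA _ (fun f _ => F f)) big_distrr /=.
by apply: eq_bigr => f _; rewrite sum_nat_const card_ffun mulnC.
Qed.

Lemma sum_binom_avoid S (j : rT) m :
  \sum_(f : {ffun aT -> rT}) 'C(#|[set y in S | f y != j]|, m) * #|rT| ^ m =
    'C(#|S|, m) * #|rT|.-1 ^ m * #|rT| ^ #|aT|.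
Proof.
have drawE (f : {ffun aT -> rT}) : 'C(#|[set y in S | f y != j]|, m) =
    \sum_(Y : {set aT} | (Y \subset S) && (#|Y| == m)) [forall y in Y, f y != j].
  rewrite -cards_draws -sum1dep_card big_mkcond [RHS]big_mkcond; apply: eq_bigr => Y _.
  have -> : (Y \subset [set y in S | f y != j]) = (Y \subset S) && [forall y in Y, f y != j].
    apply/subsetP/andP => [sYS | [/subsetP sYS /forall_inP avoidY] y yY].
      by split; [apply/subsetP | apply/forall_inP] => y /sYS; rewrite inE => /andP[].
    by rewrite inE sYS ?avoidY.
  by case: (Y \subset S); case: (#|Y| == m); case: [forall y in Y, _].
under eq_bigr => f _ do rewrite drawE big_distrl /=.
rewrite exchange_big /= -cards_draws -mulnA -sum_nat_cond_const.
apply: eq_bigr => Y /andP[_ /eqP cardY].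
rewrite -big_distrl /= sum_nat_of_bool (card_ffun_restricted Y (fun _ => predC1 j)).
under eq_bigr do rewrite cardC1.
by rewrite prod_nat_const cardY -mulnA -expnD -cardY addnC cardsC.
Qed.

End FinFunCounting.

Section ColorClasses.
Variables (T : finType) (M : matroid T) (n : nat) (B : 'I_n -> {set T}).
Hypothesis rankM : mrank M = n.
Hypothesis basisB : forall i, is_basis M (B i).
Hypothesis disjointB : forall i k, i != k -> [disjoint B i & B k].
Variables (t : nat) (j : 'I_t).
Local Notation coloring := {ffun T -> 'I_t}.
Implicit Types (U S : {set T}) (i k : 'I_n) (c : coloring).

Definition color_class (c : coloring) i : {set T} := [set y in B i | c y == j].

Lemma basis_extension U i : exists S, [/\ S \subset B i, #|S| = n - rk M U &
  forall S' : {set T}, S' \subset S -> rk M U + #|S'| <= rk M (U :|: S')].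
Proof.
have [J /andP[sJU iJ] eJ] := rk_witness M U.
have [K [sJK sKJB iK eK]] := indep_extend iJ (subsetUl J (B i)).
have cardK : #|K| = n.
  rewrite eK; apply/eqP; rewrite eqn_leq -{1}rankM rk_le_mrank /=.
  have /andP[iB _] := basisB i.
  apply: leq_trans (indep_card_le_rk (subsetUr J (B i)) iB).
  by rewrite (card_basis (basisB i)) rankM.
exists (K :\: J); split=> [||S' sS'].
- by apply/subsetP => y /setDP[yK yJ]; move: (subsetP sKJB y yK); rewrite inE (negbTE yJ).
- by rewrite cardsD (setIidPr sJK) cardK eJ.
have dJS : [disjoint J & S'].
  by apply/pred0P => y /=; apply/andP => -[yJ /(subsetP sS')]; rewrite inE yJ.
have iJS : indep M (J :|: S').
  by apply: indep_subset iK; rewrite subUset sJK (subset_trans sS') ?subsetDl.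
have := indep_card_le_rk (setSU S' sJU) iJS.
by rewrite cardsU (disjoint_setI0 dJS) cards0 subn0 eJ.
Qed.

Lemma sum_binom_rk_color_class U i m :
  t ^ m * \sum_c 'C(n - rk M (U :|: color_class c i), m) <=
    t ^ #|T| * 'C(n - rk M U, m) * t.-1 ^ m.
Proof.
have [S [sSB cardS rkS']] := basis_extension U i.
rewrite mulnC big_distrl /=.
apply: (@leq_trans (\sum_(c : coloring) 'C(#|[set y in S | c y != j]|, m) * #|'I_t| ^ m)).
  apply: leq_sum => c _; rewrite card_ord leq_mul2r leq_bin2l ?orbT //.
  set S1 := [set y in S | c y == j].
  have cardS1 : #|S1| + #|[set y in S | c y != j]| = #|S|.
    rewrite -(cardsID [set y | c y == j] S).
    by congr (_ + _); apply: eq_card => y; rewrite !inE andbC.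
  have S1_sub : S1 \subset color_class c i.
    by apply/subsetP => y; rewrite !inE => /andP[/(subsetP sSB) -> ->].
  have S1_S : S1 \subset S by apply/subsetP => y; rewrite inE => /andP[].
  have := rkS' S1 S1_S.
  have := rkS M (setUS U S1_sub); have := rk_le_mrank M U.
  by rewrite rankM; lia.
by rewrite sum_binom_avoid card_ord cardS mulnC mulnA.
Qed.

Definition bad_colorings (I : {set 'I_n}) : {set coloring} :=
  [set c | rk M (\bigcup_(i in I) color_class c i) < #|I|].

Lemma color_class_splice_in c c' i : color_class (splice (B i) c c') i = color_class c' i.
Proof. by apply/setP => y; rewrite !inE ffunE; case: (y \in B i). Qed.

Lemma color_class_splice_out c c' i k : k != i ->
  color_class (splice (B i) c c') k = color_class c k.
Proof.
move=> nki; apply/setP => y; rewrite !inE ffunE.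
by case yk: (y \in B k); rewrite // (disjointFr (disjointB nki) yk).
Qed.

Lemma sum_binom_rk_bigcup m (s : seq 'I_n) U : uniq s ->
  t ^ (m * size s) * \sum_c 'C(n - rk M (U :|: \bigcup_(i <- s) color_class c i), m)
    <= t ^ #|T| * 'C(n - rk M U, m) * t.-1 ^ (m * size s).
Proof.
elim: s U => [|i s IH] U /=.
  move=> _; rewrite muln0 expn0 mul1n muln1.
  under eq_bigr do rewrite big_nil setU0.
  by rewrite sum_nat_const card_ffun card_ord.
case/andP=> i_notin_s uniq_s.
pose g x c := 'C(n - rk M ((U :|: color_class x i) :|: \bigcup_(k <- s) color_class c k), m).
have spliceE : t ^ #|T| * \sum_c 'C(n - rk M (U :|: \bigcup_(k <- i :: s) color_class c k), m)
    = \sum_x \sum_c g x c.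
  rewrite -[t in t ^ #|T|]card_ord -(sum_splice (B i)) exchange_big /=.
  apply: eq_bigr => x _; apply: eq_bigr => c _.
  rewrite big_cons color_class_splice_in setUA /g; congr 'C(n - rk M (_ :|: _), m).
  rewrite big_seq [RHS]big_seq; apply: eq_bigr => k ks.
  by apply: color_class_splice_out; apply: contraNneq i_notin_s => <-.
have tT_gt0 : 0 < t ^ #|T| by rewrite expn_gt0 (leq_ltn_trans (leq0n j) (ltn_ord j)).
rewrite -(leq_pmul2l tT_gt0) mulnS expnD -!mulnA mulnCA.
rewrite [t ^ #|T| * (t ^ (m * size s) * _)]mulnCA spliceE big_distrr /=.
apply: (@leq_trans (t ^ m * \sum_x (t ^ #|T| * 'C(n - rk M (U :|: color_class x i), m)
                                         * t.-1 ^ (m * size s)))).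
  by rewrite leq_mul2l leq_sum ?orbT // => x _; apply: IH.
rewrite -big_distrl -big_distrr /= mulnCA expnD.
have := sum_binom_rk_color_class U i m.
set S' := \sum_x _; set tT := t ^ #|T|; set D := t.-1 ^ (m * size s) => stepS.
have -> : tT * S' * (t ^ m * D) = tT * D * (t ^ m * S') by ring.
have -> : tT * (tT * ('C(n - rk M U, m) * (t.-1 ^ m * D))) =
          tT * D * (tT * 'C(n - rk M U, m) * t.-1 ^ m) by ring.
exact: leq_mul (leqnn _) stepS.
Qed.

(* With [m = n.+1 - #|I|], each colouring on which the classes in [I] have
   rank below [#|I|] contributes at least [1] to the binomial sum. *)
Lemma card_bad_colorings (I : {set 'I_n}) :
  #|bad_colorings I| * t ^ ((n.+1 - #|I|) * #|I|)
    <= t ^ #|T| * 'C(n, n.+1 - #|I|) * t.-1 ^ ((n.+1 - #|I|) * #|I|).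
Proof.
have := sum_binom_rk_bigcup (n.+1 - #|I|) set0 (enum_uniq I).
rewrite -cardE rk_set0 subn0 => bound; rewrite mulnC; apply: leq_trans bound.
rewrite leq_mul2l -sum1dep_card big_mkcond leq_sum ?orbT // => c _ /=.
rewrite set0U big_enum; case: ltnP => // rk_lt; rewrite bin_gt0.
have : #|I| <= n by rewrite -[X in _ <= X]card_ord max_card.
by move: rk_lt; set r := rk M _; lia.
Qed.

End ColorClasses.

Lemma bin_le_expn n k : 'C(n, k) <= n ^ k.
Proof.
elim: k => [|k IH]; first by rewrite bin0.
apply: leq_trans (_ : k.+1 * 'C(n, k.+1) <= _); first by rewrite leq_pmull.
by rewrite mul_bin_left expnS leq_mul ?leq_subr.
Qed.

Lemma bin_mul_bin_le n c : 0 < c <= n ->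
  'C(n, c) * 'C(n, n.+1 - c) * n ^ 2 <= n ^ (3 * minn c (n.+1 - c)).
Proof.
case/andP=> c_gt0 c_le_n; have n_gt0 : 0 < n by apply: leq_trans c_le_n.
have [c_small | c_large] := leqP c (n.+1 - c).
  have -> : 'C(n, n.+1 - c) = 'C(n, c.-1).
    by rewrite -(bin_sub (_ : c.-1 <= n)); [congr 'C(_, _); lia | lia].
  apply: leq_trans (_ : n ^ c * n ^ c.-1 * n ^ 2 <= _).
    by rewrite !leq_mul ?bin_le_expn.
  by rewrite -!expnD leq_pexp2l //; lia.
have -> : 'C(n, c) = 'C(n, (n.+1 - c).-1).
  by rewrite -(bin_sub (_ : (n.+1 - c).-1 <= n)); [congr 'C(_, _); lia | lia].
apply: leq_trans (_ : n ^ (n.+1 - c).-1 * n ^ (n.+1 - c) * n ^ 2 <= _).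
  by rewrite !leq_mul ?bin_le_expn.
by rewrite -!expnD leq_pexp2l //; lia.
Qed.

Lemma minn_mul_le n c : 0 < c <= n -> minn c (n.+1 - c) * n.+1 <= 2 * ((n.+1 - c) * c).
Proof. by case/andP=> c_gt0 c_le_n; case: (leqP c (n.+1 - c)); nia. Qed.

Import Order.TTheory GRing.Theory Num.Theory.
Local Open Scope ring_scope.

Lemma sum_set_card (V : nmodType) (aT : finType) (f : nat -> V) :
  \sum_(A : {set aT}) f #|A| = \sum_(c < #|aT|.+1) f c *+ 'C(#|aT|, c).
Proof.
rewrite (partition_big (fun A : {set aT} => inord #|A| : 'I_#|aT|.+1) predT) //=.
apply: eq_bigr => c _; rewrite -card_draws -sumr_const.
have cardE (A : {set aT}) : (inord #|A| : 'I_#|aT|.+1) = #|A| :> nat.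
  by rewrite inordK // ltnS max_card.
by apply: eq_big => A; rewrite ?inE -val_eqE /= cardE // => /eqP ->.
Qed.

Section RealBounds.
Variable R : realType.

Definition bad_prob_bound (n t k : nat) : R :=
  'C(n, n.+1 - k)%:R * (1 - t%:R^-1) ^+ ((n.+1 - k) * k).

Lemma exprn_le_expR (x L : R) k : 0 <= x -> x <= expR L -> x ^+ k <= expR (k%:R * L).
Proof. by move=> x_ge0 x_le; rewrite expRM_natl lerXn2r ?nnegrE ?expR_ge0. Qed.

(* [n <= e^L] bounds the binomials by [e^(3 a L)], [1 - 1/t <= e^(-1/t)] bounds
   the power, and [6 L t <= n] makes the exponents cancel. *)
Lemma bin_mul_bin_decay_le (n t c : nat) (L : R) : (0 < t)%N -> (0 < c <= n)%N ->
  6 * L * t%:R <= n%:R -> n%:R <= expR L ->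
  ('C(n, c) * 'C(n, n.+1 - c))%:R * (1 - t%:R^-1) ^+ ((n.+1 - c) * c) * n%:R ^+ 2 <= 1 :> R.
Proof.
move=> t_gt0 c_range tL_le n_le.
set a := minn c (n.+1 - c); set k := ((n.+1 - c) * c)%N.
have t_pos : 0 < t%:R :> R by rewrite ltr0n.
have decay_ge0 : 0 <= 1 - t%:R^-1 :> R by rewrite subr_ge0 invf_le1 // ler1n.
have decay_le : (1 - t%:R^-1) ^+ k <= expR (k%:R * - t%:R^-1) :> R.
  by apply: exprn_le_expR => //; apply: expR_ge1Dx.
have bin_le : ('C(n, c) * 'C(n, n.+1 - c))%:R * n%:R ^+ 2 <= expR ((3 * a)%:R * L).
  apply: le_trans (exprn_le_expR _ (ler0n _ _) n_le).
  by rewrite -natrX -natrM -natrX ler_nat bin_mul_bin_le.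
have exponent_le0 : (3 * a)%:R * L + k%:R * - t%:R^-1 <= 0.
  have := minn_mul_le c_range; rewrite -/a -/k -(ler_nat R) !natrM -natr1 => ak.
  have a_ge0 : 0 <= a%:R :> R := ler0n _ _.
  rewrite mulrN subr_le0 ler_pdivlMr //.
  have := ler_wpM2l a_ge0 tL_le; nra.
rewrite mulrAC; apply: le_trans (ler_pM _ _ bin_le decay_le) _.
- by rewrite -natrX -natrM ler0n.
- exact: exprn_ge0.
by rewrite -exp.expRD -[leRHS](exp.expR0 R) ler_expR.
Qed.

Lemma union_bound_lt1 (n t : nat) (L : R) : (1 < n)%N -> (0 < t)%N -> 1 <= L ->
  6 * L * t%:R <= n%:R -> n%:R <= expR L ->
  t%:R * \sum_(I : {set 'I_n}) bad_prob_bound n t #|I| < 1.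
Proof.
move=> n_gt1 t_gt0 L_ge1 tL_le n_le; rewrite sum_set_card card_ord.
have n2_pos : 0 < n%:R ^+ 2 :> R by rewrite exprn_gt0 // ltr0n ltnW.
have term_le (c : 'I_n.+1) : bad_prob_bound n t c *+ 'C(n, c) <= (n%:R ^+ 2)^-1.
  have [-> | c_gt0] := posnP c.
    by rewrite /bad_prob_bound subn0 bin_small // mul0r mul0rn invr_ge0 ltW.
  rewrite /bad_prob_bound -(ler_pM2r n2_pos) mulVf ?gt_eqF // -[_ *+ 'C(n, c)]mulr_natl.
  rewrite [_%:R * (_%:R * _)]mulrA -natrM.
  by apply: (bin_mul_bin_decay_le t_gt0 _ tL_le n_le); rewrite c_gt0 -ltnS ltn_ord.
apply: (@le_lt_trans _ _ (t%:R * (n.+1%:R * (n%:R ^+ 2)^-1))).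
  rewrite ler_wpM2l ?ler0n //; apply: le_trans (ler_sum _ (fun c _ => term_le c)) _.
  by rewrite sumr_const card_ord mulr_natl.
have t6_le : 6 * t%:R <= n%:R :> R.
  by apply: le_trans tL_le; rewrite ler_pM2r ?ltr0n //; lra.
have n_ge2 : 2 <= n%:R :> R by rewrite (ler_nat R 2).
by rewrite mulrA ltr_pdivrMr // mul1r -natr1; nra.
Qed.

End RealBounds.

Section Transversals.
Variables (T : finType) (M : matroid T) (n : nat) (B : 'I_n -> {set T}).
Hypothesis rankM : mrank M = n.
Hypothesis disjointB : forall i k, i != k -> [disjoint B i & B k].

Lemma imset_transversal_basis (g : 'I_n -> T) :
  (forall i, g i \in B i) -> indep M [set g i | i : 'I_n] ->
  #|[set g i | i : 'I_n]| = n -> transversal_basis M B [set g i | i : 'I_n].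
Proof.
move=> gB indep_g card_g; split; first by rewrite indep_card_basis // card_g rankM.
move=> i; apply/eqP/cards1P; exists (g i); apply/setP => y; rewrite !inE.
apply/andP/eqP => [[/imsetP[k _ ->] gkB] | ->]; last by rewrite imset_f.
have [-> // | nki] := eqVneq k i.
by rewrite (disjointFr (disjointB nki) (gB k)) in gkB.
Qed.

Lemma disjoint_imset_color_classes (t : nat) (j j' : 'I_t) (c : {ffun T -> 'I_t})
    (g g' : 'I_n -> T) : j != j' ->
  (forall i, g i \in color_class B j c i) -> (forall i, g' i \in color_class B j' c i) ->
  [disjoint [set g i | i : 'I_n] & [set g' i | i : 'I_n]].
Proof.
move=> neq_jj' gj g'j'; apply/pred0P => y /=; apply/andP => -[/imsetP[i _ ->] /imsetP[i' _ eq_g]].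
move: (gj i) (g'j' i'); rewrite !inE eq_g => /andP[_ /eqP cj] /andP[_ /eqP cj'].
by rewrite -cj -cj' eqxx in neq_jj'.
Qed.

End Transversals.

Section GoodColoring.
Variables (T : finType) (M : matroid T) (n : nat) (B : 'I_n -> {set T}).
Hypothesis rankM : mrank M = n.
Hypothesis basisB : forall i, is_basis M (B i).
Hypothesis disjointB : forall i k, i != k -> [disjoint B i & B k].
Variables (R : realType) (t : nat).
Hypothesis t_gt0 : (0 < t)%N.

Lemma card_bad_colorings_le (j : 'I_t) (I : {set 'I_n}) :
  #|bad_colorings M B j I|%:R <= t%:R ^+ #|T| * bad_prob_bound R n t #|I|.
Proof.
have decayE : 1 - t%:R^-1 = t.-1%:R / t%:R :> R.
  by rewrite -subn1 natrB // mulrBl divff ?pnatr_eq0 -?lt0n // mul1r.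
have := card_bad_colorings rankM basisB disjointB j I.
rewrite -(ler_nat R) !natrM !natrX => bad_le.
by rewrite /bad_prob_bound decayE expr_div_n !mulrA ler_pdivlMr ?exprn_gt0 ?ltr0n.
Qed.

Lemma exists_good_coloring :
  t%:R * \sum_(I : {set 'I_n}) bad_prob_bound R n t #|I| < 1 ->
  exists c : {ffun T -> 'I_t}, forall j, rado_cond M (color_class B j c).
Proof.
have [c /forallP good _ | no_good] :=
  pickP [pred c | [forall p : 'I_t * {set 'I_n}, c \notin bad_colorings M B p.1 p.2]].
  exists c => j; apply/forallP => I.
  by have := good (j, I); rewrite inE -leqNgt.
rewrite ltNge => /negP not_le; exfalso; apply: not_le.
have cover c : exists p : 'I_t * {set 'I_n}, c \in bad_colorings M B p.1 p.2.
  by have /negbT/forallPn[p] := no_good c; rewrite negbK; exists p.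
have := card_le_sum_cover cover.
rewrite card_ffun card_ord -(pair_bigA _ (fun j I => #|bad_colorings M B j I|)).
rewrite -(ler_nat R) natrX natr_sum => cover_le.
have tT_pos : 0 < t%:R ^+ #|T| :> R by rewrite exprn_gt0 ?ltr0n.
rewrite -(ler_pM2l tT_pos) mulr1 (le_trans cover_le) //.
have sum_constE (x : R) : \sum_(j : 'I_t) x = x *+ t by rewrite sumr_const card_ord.
rewrite mulrCA mulr_natl -sum_constE; apply: ler_sum => j _.
by rewrite natr_sum big_distrr; apply: ler_sum => I _; apply: card_bad_colorings_le.
Qed.

End GoodColoring.

Lemma tbound_spec n : (1 < n)%N ->
  exists L : Rdefinitions.R,
    [/\ 1 <= L, 6 * L * (tbound n)%:R <= n%:R & n%:R <= expR L].
Proof.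
move=> n_gt1; set L := (Num.ceil (ln (n%:R : Rdefinitions.R)))%:~R : Rdefinitions.R.
have ln_gt0 : 0 < ln (n%:R : Rdefinitions.R) by rewrite ln_gt0 // ltr1n.
have L_ge1 : 1 <= L by rewrite ler1z -gtz0_ge1 ceil_gt0.
exists L; split=> //.
  have L6_pos : 0 < 6 * L by lra.
  rewrite /tbound -/L natr_absz ger0_norm; last first.
    by rewrite floor_ge0 divr_ge0 ?ler0n ?(ltW L6_pos).
  by have := floor_le (n%:R / (6 * L)); rewrite ler_pdivlMr // mulrC.
rewrite -[leLHS](@lnK _ n%:R) ?posrE ?ltr0n 1?ltnW //.
by rewrite ler_expR ceil_ge.
Qed.

Theorem theorem1p2 (T : finType) (M : matroid T) (n : nat) :
  (2 <= n)%N -> mrank M = n ->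
  forall B : 'I_n -> {set T},
    (forall i, is_basis M (B i)) ->
    (forall i j, i != j -> [disjoint B i & B j]) ->
    exists F : 'I_(tbound n) -> {set T},
      (forall k, transversal_basis M B (F k)) /\
      (forall k l, k != l -> [disjoint F k & F l]).
Proof.
move=> n_gt1 rankM B basisB disjointB.
have [t0 | t_gt0] := posnP (tbound n).
  by exists (fun=> set0); split=> [k | k]; exfalso; case: k => k; rewrite t0.
have [L [L_ge1 tL_le n_le]] := tbound_spec n_gt1.
have [c goodc] := exists_good_coloring rankM basisB disjointB t_gt0
  (union_bound_lt1 n_gt1 t_gt0 L_ge1 tL_le n_le).
have /fin_all_exists[g gP] k := rado (goodc k).
exists (fun k => [set g k i | i : 'I_n]); split=> [k | k l neq_kl].
  have [g_class indep_g card_g] := gP k.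
  apply: imset_transversal_basis => // i.
  by have := g_class i; rewrite inE => /andP[].
by apply: (disjoint_imset_color_classes neq_kl); case: (gP k); case: (gP l).
Qed.
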